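(* Let $\theta>0$, $\lambda>0$, $\mu>0$, $e>0$ with $\lambda<\mu+1$. Define the private optimal deployment $$\alpha^*(\theta)=\begin{cases}\mu+\theta(1-\lambda), & \lambda\theta\le 1,\\ \theta+\mu+1-2\sqrt{\lambda\theta}, & \lambda\theta>1,\end{cases}$$ the first-best deployment $$\alpha^{**}_{FB}(\theta)=\max\!\left\{0,\begin{cases}\mu+\theta(1-(1+e)\lambda), & (1+e)\lambda\theta\le 1,\\ \theta+\mu+1-2\sqrt{(1+e)\lambda\theta}, & (1+e)\lambda\theta>1,\end{cases}\right\}$$ and the second-best deployment $$\alpha^{**}_{SB}(\theta)=\max\!\left\{0,\begin{cases}\mu+\theta(1-(1+e)\lambda), & \lambda\theta\le 1,\\ \theta+\mu+1-(2+e)\sqrt{\lambda\theta}, & \lambda\theta>1.\end{cases}\right\}$$ Then: 1. $\alpha^{**}_{SB}(\theta)\le\alpha^{**}_{FB}(\theta)\le\alpha^*(\theta)$ for all $\theta>0$. 2. (First-best paradox conditions.) In the regime $(1+e)\lambda\theta\le1$, the derivative with respect to $\theta$ of $\mu+\theta(1-(1+e)\lambda)$ is negative iff $(1+e)\lambda>1$; in the regime $(1+e)\lambda\theta>1$, the derivative with respect to $\theta$ of $\theta+\mu+1-2\sqrt{(1+e)\lambda\theta}$ is negative iff $\theta<(1+e)\lambda$. Hence the first-best paradox region is weakly wider than the private one (private conditions: $\lambda>1$ in the regime $\lambda\theta\le1$, and $\theta<\lambda$ in the regime $\lambda\theta>1$). 3. (Second-best paradox conditions.) In the regime $\lambda\theta\le1$,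 the derivative with respect to $\theta$ of $\mu+\theta(1-(1+e)\lambda)$ is negative iff $(1+e)\lambda>1$; in the regime $\lambda\theta>1$, the derivative with respect to $\theta$ of $\theta+\mu+1-(2+e)\sqrt{\lambda\theta}$ is negative iff $\theta<\left(\frac{2+e}{2}\right)^2\lambda$. Hence the second-best paradox region is weakly wider than the private one. 4. There exist parameter values for which $\alpha^*$ is increasing in $\theta$ (outside the private paradox region) while the corresponding social deployment expression is decreasing in $\theta$ (inside the social paradox region).
   Context: $\theta$ is AI capability, $\lambda$ breach-loss magnitude, $\mu$ organizational readiness, $e$ breach externality parameter. The ''paradox region'' is the set of parameters where optimal deployment (private, first-best, or second-best as indicated) is decreasing in $\theta$. These deployment formulas arise from a firm with profit $(\theta+\mu)\alpha-\alpha^2/2-\frac{\alpha}{\alpha+d}\lambda\alpha\theta-d$; first-best maximizes this minus $e\frac{\alpha}{\alpha+d}\lambda\alpha\theta$ jointly over $(\alpha,d)$, second-best maximizes it over $\alpha$ with $d$ set at the firm's private optimum. *)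

From Stdlib Require Import Reals.
From Coquelicot Require Import Coquelicot.
Open Scope R_scope.

Definition alpha_priv (lam mu theta : R) : R :=
  if Rle_dec (lam * theta) 1 then mu + theta * (1 - lam)
  else theta + mu + 1 - 2 * sqrt (lam * theta).

Definition alpha_fb (lam mu e theta : R) : R :=
  Rmax 0 (if Rle_dec ((1 + e) * lam * theta) 1
          then mu + theta * (1 - (1 + e) * lam)
          else theta + mu + 1 - 2 * sqrt ((1 + e) * lam * theta)).

Definition alpha_sb (lam mu e theta : R) : R :=
  Rmax 0 (if Rle_dec (lam * theta) 1
          then mu + theta * (1 - (1 + e) * lam)
          else theta + mu + 1 - (2 + e) * sqrt (lam * theta)).

Definition slope_priv (lam mu theta : R) : R :=
  if Rle_dec (lam * theta) 1
  then Derive (fun t => mu + t * (1 - lam)) theta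
  else Derive (fun t => t + mu + 1 - 2 * sqrt (lam * t)) theta.

Definition slope_fb (lam mu e theta : R) : R :=
  if Rle_dec ((1 + e) * lam * theta) 1
  then Derive (fun t => mu + t * (1 - (1 + e) * lam)) theta
  else Derive (fun t => t + mu + 1 - 2 * sqrt ((1 + e) * lam * t)) theta.

Definition slope_sb (lam mu e theta : R) : R :=
  if Rle_dec (lam * theta) 1
  then Derive (fun t => mu + t * (1 - (1 + e) * lam)) theta
  else Derive (fun t => t + mu + 1 - (2 + e) * sqrt (lam * t)) theta.

Definition paradox_priv (lam mu theta : R) : Prop := slope_priv lam mu theta < 0.
Definition paradox_fb (lam mu e theta : R) : Prop := slope_fb lam mu e theta < 0.
Definition paradox_sb (lam mu e theta : R) : Prop := slope_sb lam mu e theta < 0.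

Definition params_ok (lam mu e : R) : Prop :=
  0 < lam /\ 0 < mu /\ 0 < e /\ lam < mu + 1.

(** Private and first-best deployment are one regime-switching formula,
    [deployment c mu theta], at breach loss [c = lam] and [c = (1 + e) lam].
    It is antitone in [c], and its slope is negative exactly when
    [1 < c /\ theta < c], a region that grows with [c]; the second-best
    deployment only inflates the penalty terms of the private one.  Every
    square-root comparison is an instance of AM-GM, [2 sqrt (a b) <= a + b]. *)

From Stdlib Require Import Reals Lra Psatz.
From Coquelicot Require Import Coquelicot.
Open Scope R_scope.

Lemma two_sqrt_mult_le_add (a b : R) : 0 <= a -> 0 <= b -> 2 * sqrt (a * b) <= a + b.
Proof.
  intros Ha Hb.
  rewrite sqrt_mult by assumption.
  pose proof (sqrt_sqrt a Ha); pose proof (sqrt_sqrt b Hb).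
  pose proof (Rle_0_sqr (sqrt a - sqrt b)); unfold Rsqr in *.
  nra.
Qed.

Lemma two_sqrt_le_add1 (y : R) : 0 <= y -> 2 * sqrt y <= 1 + y.
Proof.
  intros Hy. rewrite <- (Rmult_1_l y) at 1.
  apply two_sqrt_mult_le_add; lra.
Qed.

Definition deployment (c mu theta : R) : R :=
  if Rle_dec (c * theta) 1 then mu + theta * (1 - c)
  else theta + mu + 1 - 2 * sqrt (c * theta).

Definition deployment_slope (c mu theta : R) : R :=
  if Rle_dec (c * theta) 1
  then Derive (fun t => mu + t * (1 - c)) theta
  else Derive (fun t => t + mu + 1 - 2 * sqrt (c * t)) theta.

Lemma deployment_nonneg (c mu theta : R) :
  0 <= c -> 0 <= mu -> c < mu + 1 -> 0 <= theta -> 0 <= deployment c mu theta.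
Proof.
  intros Hc Hmu Hcmu Ht. unfold deployment.
  destruct (Rle_dec (c * theta) 1) as [Hlin | Hsqrt].
  - destruct (Rle_dec c 1).
    + pose proof (Rmult_le_pos theta (1 - c) Ht ltac:(lra)). lra.
    + assert (theta < 1) by nra. nra.
  - rewrite (Rmult_comm c theta).
    pose proof (two_sqrt_mult_le_add theta c Ht Hc). lra.
Qed.

Lemma deployment_antitone (c1 c2 mu theta : R) :
  c1 <= c2 -> 0 <= theta -> deployment c2 mu theta <= deployment c1 mu theta.
Proof.
  intros Hc12 Ht. unfold deployment.
  assert (Hct : c1 * theta <= c2 * theta) by nra.
  destruct (Rle_dec (c2 * theta) 1); destruct (Rle_dec (c1 * theta) 1).
  - nra.
  - lra.
  - assert (Hgt1 : 1 < sqrt (c2 * theta)).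
    { rewrite <- sqrt_1. apply sqrt_lt_1_alt. lra. }
    lra.
  - pose proof (sqrt_le_1_alt _ _ Hct). lra.
Qed.

Lemma alpha_sb_le_alpha_fb (lam mu e theta : R) :
  0 < lam -> 0 < e -> 0 < theta -> alpha_sb lam mu e theta <= alpha_fb lam mu e theta.
Proof.
  intros Hl He Ht. unfold alpha_sb, alpha_fb.
  apply Rle_max_compat_l.
  assert (Hlt : 0 <= lam * theta) by nra.
  destruct (Rle_dec (lam * theta) 1); destruct (Rle_dec ((1 + e) * lam * theta) 1).
  - lra.
  - pose proof (two_sqrt_le_add1 ((1 + e) * lam * theta) ltac:(nra)). nra.
  - nra.
  - rewrite (Rmult_assoc (1 + e) lam theta), (sqrt_mult (1 + e) (lam * theta)) by nra.
    pose proof (two_sqrt_le_add1 (1 + e) ltac:(lra)).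
    pose proof (Rmult_le_pos (2 + e - 2 * sqrt (1 + e)) (sqrt (lam * theta))
                  ltac:(lra) (sqrt_pos _)).
    lra.
Qed.

Lemma alpha_fb_le_alpha_priv (lam mu e theta : R) :
  0 < lam -> 0 < mu -> 0 < e -> lam < mu + 1 -> 0 < theta ->
  alpha_fb lam mu e theta <= alpha_priv lam mu theta.
Proof.
  intros Hl Hm He Hlm Ht.
  change (Rmax 0 (deployment ((1 + e) * lam) mu theta) <= deployment lam mu theta).
  apply Rmax_lub.
  - apply deployment_nonneg; lra.
  - apply deployment_antitone; nra.
Qed.

Lemma Derive_affine (a b x : R) : Derive (fun t => a + t * b) x = b.
Proof. apply is_derive_unique. auto_derive; trivial. ring. Qed.

Lemma Derive_sqrt_deployment (a k c x : R) : 0 < c -> 0 < x ->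
  Derive (fun t => t + a + 1 - k * sqrt (c * t)) x = 1 - k * c / (2 * sqrt (c * x)).
Proof.
  intros Hc Hx. apply is_derive_unique. auto_derive.
  - nra.
  - field. apply Rgt_not_eq, sqrt_lt_R0. nra.
Qed.

Lemma Derive_sqrt_deployment_neg_iff (a k c x : R) : 0 < c -> 0 < x -> 0 < k ->
  Derive (fun t => t + a + 1 - k * sqrt (c * t)) x < 0 <-> 4 * x < k ^ 2 * c.
Proof.
  intros Hc Hx Hk. rewrite Derive_sqrt_deployment by assumption.
  assert (Hs : 0 < sqrt (c * x)) by (apply sqrt_lt_R0; nra).
  pose proof (sqrt_sqrt (c * x) ltac:(nra)) as Hss.
  set (s := sqrt (c * x)) in *.
  transitivity (2 * s < k * c).
  - replace (1 - k * c / (2 * s)) with ((2 * s - k * c) / (2 * s)) by (field; lra).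
    split; intro Hneg.
    + destruct (Rlt_or_le (2 * s) (k * c)) as [Hlt | Hge]; [exact Hlt |].
      assert (0 <= (2 * s - k * c) / (2 * s)) by (apply Rdiv_le_0_compat; lra). lra.
    + apply Rdiv_neg_pos; lra.
  - (* square both (positive) sides and cancel [c] *)
    split; intro Hlt; [nra |].
    destruct (Rlt_or_le (2 * s) (k * c)) as [Hlt' | Hge]; [exact Hlt' |].
    assert ((k * c) * (k * c) <= (2 * s) * (2 * s)) by (apply Rmult_le_compat; nra).
    nra.
Qed.

Lemma deployment_slope_neg_iff (c mu theta : R) : 0 < c -> 0 < theta ->
  deployment_slope c mu theta < 0 <-> 1 < c /\ theta < c.
Proof.
  intros Hc Ht. unfold deployment_slope.
  destruct (Rle_dec (c * theta) 1).
  - rewrite Derive_affine. split; [intro; split; nra | lra].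
  - rewrite Derive_sqrt_deployment_neg_iff by lra. split; [intro; split; nra | lra].
Qed.

Lemma paradox_priv_fb (lam mu e theta : R) : 0 < lam -> 0 < e -> 0 < theta ->
  paradox_priv lam mu theta -> paradox_fb lam mu e theta.
Proof.
  intros Hl He Ht.
  change (deployment_slope lam mu theta < 0 ->
          deployment_slope ((1 + e) * lam) mu theta < 0).
  rewrite !deployment_slope_neg_iff by nra. nra.
Qed.

Lemma paradox_priv_sb (lam mu e theta : R) : 0 < lam -> 0 < e -> 0 < theta ->
  paradox_priv lam mu theta -> paradox_sb lam mu e theta.
Proof.
  intros Hl He Ht Hpriv.
  apply (deployment_slope_neg_iff lam mu theta Hl Ht) in Hpriv as [Hl1 Htl].
  unfold paradox_sb, slope_sb.
  destruct (Rle_dec (lam * theta) 1).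
  - rewrite Derive_affine. nra.
  - rewrite Derive_sqrt_deployment_neg_iff by lra. nra.
Qed.

Lemma paradox_example :
  params_ok (1 / 2) 1 2 /\ slope_priv (1 / 2) 1 (1 / 2) > 0 /\
  paradox_fb (1 / 2) 1 2 (1 / 2) /\ paradox_sb (1 / 2) 1 2 (1 / 2).
Proof.
  unfold params_ok, paradox_fb, paradox_sb, slope_priv, slope_sb.
  change (slope_fb (1 / 2) 1 2 (1 / 2)) with (deployment_slope ((1 + 2) * (1 / 2)) 1 (1 / 2)).
  rewrite deployment_slope_neg_iff by lra.
  destruct (Rle_dec (1 / 2 * (1 / 2)) 1); [| lra].
  rewrite !Derive_affine. lra.
Qed.

Theorem proposition8 (lam mu e : R) (Hlam : 0 < lam) (Hmu : 0 < mu) (He : 0 < e)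
  (Hlm : lam < mu + 1) :
  (* 1. ordering of deployments *)
  (forall theta, 0 < theta ->
     alpha_sb lam mu e theta <= alpha_fb lam mu e theta /\
     alpha_fb lam mu e theta <= alpha_priv lam mu theta) /\
  (* 2. first-best paradox conditions *)
  (forall theta, 0 < theta ->
     ((1 + e) * lam * theta <= 1 ->
        (Derive (fun t => mu + t * (1 - (1 + e) * lam)) theta < 0 <-> (1 + e) * lam > 1)) /\
     ((1 + e) * lam * theta > 1 ->
        (Derive (fun t => t + mu + 1 - 2 * sqrt ((1 + e) * lam * t)) theta < 0
           <-> theta < (1 + e) * lam))) /\
  (forall theta, 0 < theta -> paradox_priv lam mu theta -> paradox_fb lam mu e theta) /\
  (* 3. second-best paradox conditions *)
  (forall theta, 0 < theta ->
     (lam * theta <= 1 ->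
        (Derive (fun t => mu + t * (1 - (1 + e) * lam)) theta < 0 <-> (1 + e) * lam > 1)) /\
     (lam * theta > 1 ->
        (Derive (fun t => t + mu + 1 - (2 + e) * sqrt (lam * t)) theta < 0
           <-> theta < ((2 + e) / 2) ^ 2 * lam))) /\
  (forall theta, 0 < theta -> paradox_priv lam mu theta -> paradox_sb lam mu e theta) /\
  (* 4. existence of parameters where private deployment increases while social decreases *)
  (exists theta' lam' mu' e', 0 < theta' /\ params_ok lam' mu' e' /\
     slope_priv lam' mu' theta' > 0 /\ paradox_fb lam' mu' e' theta') /\
  (exists theta' lam' mu' e', 0 < theta' /\ params_ok lam' mu' e' /\
     slope_priv lam' mu' theta' > 0 /\ paradox_sb lam' mu' e' theta').
Proof.
  destruct paradox_example as (Hok & Hpriv & Hfb & Hsb).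
  split; [| split; [| split; [| split; [| split; [| split]]]]].
  - intros theta Ht. split.
    + apply alpha_sb_le_alpha_fb; assumption.
    + apply alpha_fb_le_alpha_priv; assumption.
  - intros theta Ht. split; intros _.
    + rewrite Derive_affine. lra.
    + rewrite Derive_sqrt_deployment_neg_iff by nra. lra.
  - intros theta Ht. apply paradox_priv_fb; assumption.
  - intros theta Ht. split; intros _.
    + rewrite Derive_affine. lra.
    + rewrite Derive_sqrt_deployment_neg_iff by lra. split; intro; nra.
  - intros theta Ht. apply paradox_priv_sb; assumption.
  - exists (1 / 2), (1 / 2), 1, 2. split; [lra | tauto].
  - exists (1 / 2), (1 / 2), 1, 2. split; [lra | tauto].
Qed.
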